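(* Let $l_1(\Gamma, \alpha, \mathcal{A})$ be the set of all families $a = \{a_g\}_{g \in \Gamma}$ of elements of $\mathcal{A}$ such that $a_x \in \mathcal{A}\alpha_x(1)$ and $a_{-x} \in \alpha_x(1)\mathcal{A}$ for all $x \in \Gamma^+$, and $\sum_{g \in \Gamma} \|a_g\| < \infty$, normed by $\|a\| = \sum_{g\in\Gamma}\|a_g\|$. For $a, b \in l_1(\Gamma, \alpha, \mathcal{A})$ define $a\cdot b$ by $$(a \cdot b)_g := \begin{cases} \sum_{\substack{g=x-y \\ x,y>0}} a_x \alpha_{x-y}(b_{-y}) + \sum_{\substack{g=y-x \\ x,y>0}} L_x(a_{-x} b_y) + \sum_{\substack{g=x+y \\ x,y \geq 0}} a_x \alpha_x(b_y), & \text{if } 0 \leq g, \\ \sum_{\substack{g=x-y \\ x,y>0}} \alpha_{y-x}(a_x) b_{-y} + \sum_{\substack{g=y-x \\ x,y>0}} L_y(a_{-x} b_y) + \sum_{\substack{g=-x-y \\ x,y \geq 0}} \alpha_y(a_{-x}) b_{-y}, & \text{if } g < 0, \end{cases}$$ where $x, y$ run through $\Gamma^+$. Then this multiplication is well defined (i.e. $a\cdot b \in l_1(\Gamma,\alpha,\mathcal{A})$), and $\|a \cdot b\| \leq \|a\| \cdot \|b\|$ for all $a, b \in l_1(\Gamma, \alpha, \mathcal{A})$.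
   Context: $\mathcal{A}$ is a C*-algebra with identity $1$, $\Gamma$ is a totally ordered abelian group with identity $0$ and positive cone $\Gamma^+ = \{x \in \Gamma: 0 \le x\}$, and $\alpha: \Gamma^+ \to \mathrm{End}(\mathcal{A})$ is a semigroup homomorphism ($\alpha_0 = \mathrm{Id}$, $\alpha_x\circ\alpha_y = \alpha_{x+y}$) by *-endomorphisms. The system $(\mathcal{A}, \Gamma^+, \alpha)$ is assumed finely representable, equivalently there is a (unique) complete transfer action $L$: continuous linear positive maps $L_x:\mathcal{A}\to\mathcal{A}$, $x\in\Gamma^+$, with $L_{x+y} = L_y \circ L_x$, $L_x(\alpha_x(a)b) = aL_x(b)$ and $\alpha_x(L_x(a)) = \alpha_x(1)a\alpha_x(1)$ for all $a,b\in\mathcal{A}$, $x,y\in\Gamma^+$. *)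

From mathcomp Require Import all_boot all_order all_algebra.
From mathcomp Require Import complex.
From mathcomp Require Import all_classical all_reals esum.
Set Implicit Arguments.
Unset Strict Implicit.
Unset Printing Implicit Defensive.
Import Order.TTheory GRing.Theory Num.Theory.
Local Open Scope ring_scope.
Local Open Scope classical_set_scope.

Record is_cstar (R : realType) (A : algType R[i]) (nrm : A -> R)
    (star : A -> A) : Prop := {
  cs_nrm_eq0 : forall a, nrm a = 0 -> a = 0;
  cs_nrmD : forall a b, nrm (a + b) <= nrm a + nrm b;
  cs_nrmZ : forall (c : R[i]) a, nrm (c *: a) = ComplexField.Normc.normc c * nrm a;
  cs_nrmM : forall a b, nrm (a * b) <= nrm a * nrm b;
  cs_complete : forall u : nat -> A,
      (forall e, 0 < e -> exists N, forall m n, (N <= m)%N -> (N <= n)%N ->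
           nrm (u m - u n) < e) ->
      exists l, forall e, 0 < e -> exists N, forall n, (N <= n)%N -> nrm (u n - l) < e;
  cs_starD : forall a b, star (a + b) = star a + star b;
  cs_starZ : forall (c : R[i]) a, star (c *: a) = c^* *: star a;
  cs_starM : forall a b, star (a * b) = star b * star a;
  cs_starK : forall a, star (star a) = a;
  cs_cstar_id : forall a, nrm (star a * a) = nrm a ^+ 2
}.

Definition cpos (R : realType) (A : algType R[i]) (star : A -> A) (a : A) : Prop :=
  exists b, a = star b * b.

Record is_star_endo (R : realType) (A : algType R[i]) (star : A -> A)
    (f : A -> A) : Prop := {
  se_add : forall a b, f (a + b) = f a + f b;
  se_scale : forall (c : R[i]) a, f (c *: a) = c *: f a;
  se_mul : forall a b, f (a * b) = f a * f b;
  se_star : forall a, f (star a) = star (f a)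
}.

Record is_toag (G : zmodType) (le : rel G) : Prop := {
  tg_refl : forall x, le x x;
  tg_anti : forall x y, le x y -> le y x -> x = y;
  tg_trans : forall x y z, le x y -> le y z -> le x z;
  tg_total : forall x y, le x y || le y x;
  tg_transl : forall x y z, le x y -> le (x + z) (y + z)
}.

Definition glt (G : zmodType) (le : rel G) (x y : G) : Prop := le x y /\ x <> y.

(* alpha and L are given as functions on the whole of G, but only     *)
(* their values on Gamma^+ = {x | le 0 x} are constrained / used.     *)
Record is_endo_action (R : realType) (A : algType R[i]) (star : A -> A)
    (G : zmodType) (le : rel G) (alpha : G -> A -> A) : Prop := {
  ea_endo : forall x, le 0 x -> is_star_endo star (alpha x);
  ea_zero : forall a, alpha 0 a = a;
  ea_comp : forall x y, le 0 x -> le 0 y -> forall a, alpha x (alpha y a) = alpha (x + y) a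
}.

Record is_transfer_action (R : realType) (A : algType R[i]) (nrm : A -> R)
    (star : A -> A) (G : zmodType) (le : rel G) (alpha L : G -> A -> A) : Prop := {
  ta_add : forall x, le 0 x -> forall a b, L x (a + b) = L x a + L x b;
  ta_scale : forall x, le 0 x -> forall (c : R[i]) a, L x (c *: a) = c *: L x a;
  ta_cont : forall x, le 0 x -> exists K : R, forall a, nrm (L x a) <= K * nrm a;
  ta_pos : forall x, le 0 x -> forall a, cpos star a -> cpos star (L x a);
  ta_comp : forall x y, le 0 x -> le 0 y -> forall a, L (x + y) a = L y (L x a);
  ta_module : forall x, le 0 x -> forall a b, L x (alpha x a * b) = a * L x b;
  ta_cond : forall x, le 0 x -> forall a,
      alpha x (L x a) = alpha x 1 * a * alpha x 1
}.

(* Unconditional summation of a family indexed by {i | P i} in a      *)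
(* normed group: the net of finite partial sums converges to s.       *)
Definition has_sum (R : realType) (V : zmodType) (nrm : V -> R) (I : eqType)
    (P : I -> Prop) (f : I -> V) (s : V) : Prop :=
  forall e : R, 0 < e -> exists F0 : seq I, (forall i, i \in F0 -> P i) /\
    forall F : seq I, uniq F -> (forall i, i \in F -> P i) -> {subset F0 <= F} ->
      nrm (\sum_(i <- F) f i - s) < e.

Definition summable (R : realType) (V : zmodType) (nrm : V -> R) (I : eqType)
    (P : I -> Prop) (f : I -> V) : Prop := exists s, has_sum nrm P f s.

(* the value of the sum (0 if the family is not summable) *)
Definition fsum (R : realType) (V : zmodType) (nrm : V -> R)
    (I : eqType) (P : I -> Prop) (f : I -> V) : V :=
  if pselect (summable nrm P f) is left h then projT1 (cid h) else 0.

Definition l1norm (R : realType) (A : algType R[i]) (nrm : A -> R)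
    (G : zmodType) (a : G -> A) : \bar R :=
  \esum_(g in [set: G]) (nrm (a g))%:E.

Definition in_l1 (R : realType) (A : algType R[i]) (nrm : A -> R)
    (G : zmodType) (le : rel G) (alpha : G -> A -> A) (a : G -> A) : Prop :=
  (forall x, le 0 x ->
     (exists c, a x = c * alpha x 1) /\ (exists c, a (- x) = alpha x 1 * c)) /\
  (l1norm nrm a < +oo)%E.

Section Series.
Context (R : realType) (A : algType R[i]) (G : zmodType) (le : rel G)
  (alpha L : G -> A -> A) (a b : G -> A) (g : G).

Definition dom1 (p : G * G) : Prop :=
  [/\ glt le 0 p.1, glt le 0 p.2 & g = p.1 - p.2].
Definition ser1 (p : G * G) : A := a p.1 * alpha (p.1 - p.2) (b (- p.2)).
Definition dom2 (p : G * G) : Prop :=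
  [/\ glt le 0 p.1, glt le 0 p.2 & g = p.2 - p.1].
Definition ser2 (p : G * G) : A := L p.1 (a (- p.1) * b p.2).
Definition dom3 (p : G * G) : Prop :=
  [/\ le 0 p.1, le 0 p.2 & g = p.1 + p.2].
Definition ser3 (p : G * G) : A := a p.1 * alpha p.1 (b p.2).
Definition ser4 (p : G * G) : A := alpha (p.2 - p.1) (a p.1) * b (- p.2).
Definition ser5 (p : G * G) : A := L p.2 (a (- p.1) * b p.2).
Definition dom6 (p : G * G) : Prop :=
  [/\ le 0 p.1, le 0 p.2 & g = - p.1 - p.2].
Definition ser6 (p : G * G) : A := alpha p.2 (a (- p.1)) * b (- p.2).
End Series.

Definition l1prod (R : realType) (A : algType R[i]) (nrm : A -> R)
    (G : zmodType) (le : rel G) (alpha L : G -> A -> A) (a b : G -> A) (g : G) : A :=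
  if pselect (le 0 g) then
    fsum nrm (dom1 le g) (ser1 alpha a b)
    + fsum nrm (dom2 le g) (ser2 L a b)
    + fsum nrm (dom3 le g) (ser3 alpha a b)
  else
    fsum nrm (dom1 le g) (ser4 alpha a b)
    + fsum nrm (dom2 le g) (ser5 L a b)
    + fsum nrm (dom6 le g) (ser6 alpha a b).

Definition l1prod_series_converge (R : realType) (A : algType R[i]) (nrm : A -> R)
    (G : zmodType) (le : rel G) (alpha L : G -> A -> A) (a b : G -> A) : Prop :=
  forall g : G,
    (le 0 g ->
       [/\ summable nrm (dom1 le g) (ser1 alpha a b),
           summable nrm (dom2 le g) (ser2 L a b) &
           summable nrm (dom3 le g) (ser3 alpha a b)]) /\
    (~ le 0 g ->
       [/\ summable nrm (dom1 le g) (ser4 alpha a b),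
           summable nrm (dom2 le g) (ser5 L a b) &
           summable nrm (dom6 le g) (ser6 alpha a b)]).

From Pilot Require Import Defs.
From mathcomp Require Import all_boot all_order all_algebra.
From mathcomp Require Import complex.
From mathcomp Require Import all_classical all_reals esum.
From mathcomp Require Import lra ring.
Import Order.TTheory GRing.Theory Num.Theory.
Local Open Scope ring_scope.

(* Every series defining [(a . b)_g] is dominated, after an injective reindexing,
   by the products [nrm (a i) * nrm (b j)] over pairs with [i + j = g], and the
   three series of each case land in disjoint sign classes of such pairs; so
   summing over [g] gives at most [nrm a * nrm b], and completeness gives the
   convergence. Each term, hence each sum, lies in [A alpha_g(1)] (resp.
   [alpha_(-g)(1) A]) by the module property of [L].
   The domination needs [alpha_x] and [L_x] to be contractions. A self-adjoint
   contraction [h] is the real part of the unitary [h + i sqrt (1 - h^2)], whose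
   image under the *-endomorphism [alpha_x] has norm at most [nrm (alpha_x 1) <= 1].
   Positivity makes [L_x] *-preserving, hence a right module map, and then
   [c = L_x v] satisfies [c^* c = L_x (alpha_x (c^* c))]; this gives
   [nrm (L_x v)^2 <= nrm (L_x (w^* w))] with [nrm w <= nrm v], and iterating
   against an a priori bound [K] yields [nrm (L_x v) <= K^(2^-n) nrm v]. *)

Section Scalars.
Context {R : realType}.

Lemma normc_real (r : R) : ComplexField.Normc.normc (r%:C)%C = `|r|.
Proof. by rewrite /= expr0n /= addr0 sqrtr_sqr. Qed.

Lemma normcN1 : ComplexField.Normc.normc (-1 : R[i]) = 1.
Proof. by rewrite normcN ComplexField.Normc.normc1. Qed.

Lemma conjc_i : ('i%C : R[i])^* = - 'i%C.
Proof. by apply/eqP; rewrite /= eq_complex /= oppr0 !eqxx. Qed.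

Lemma mulii : 'i%C * 'i%C = -1 :> R[i].
Proof. by rewrite -expr2 sqr_i. Qed.

Lemma div_succ_lt_eventually (c : R) {e : R} : 0 < e ->
  exists N, forall n, (N <= n)%N -> c / n.+1%:R < e.
Proof.
move=> e0; have ce : 0 <= `|c| / e by rewrite divr_ge0 // ltW.
exists (Num.bound (`|c| / e)) => n hn.
rewrite ltr_pdivrMr // (le_lt_trans (ler_norm c)) // mulrC -ltr_pdivrMr //.
by apply: lt_le_trans (archi_boundP ce) _; rewrite ler_nat (leq_trans hn).
Qed.

Lemma le_of_pow2_bound {x y K : R} : 0 <= x -> 0 < y ->
  (forall n, x ^+ (2 ^ n) <= K * y ^+ (2 ^ n)) -> x <= y.
Proof.
move=> x0 y0 hK; rewrite leNgt; apply/negP => yx.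
pose r := x / y.
have r1 : 1 < r by rewrite ltr_pdivlMr // mul1r.
have rK n : r ^+ (2 ^ n) <= K by rewrite expr_div_n ler_pdivrMr ?exprn_gt0 //; apply: hK.
have bernoulli m : 1 + m%:R * (r - 1) <= r ^+ m.
  elim: m => [|m IH]; first by rewrite mul0r addr0 expr0.
  rewrite exprS -natr1.
  have r0 : 0 <= r - 1 by rewrite subr_ge0 ltW.
  have : 0 <= m%:R * (r - 1) * (r - 1) by rewrite !mulr_ge0.
  have : (1 + m%:R * (r - 1)) * r <= r ^+ m * r.
    by rewrite ler_wpM2r // ltW // (lt_trans _ r1).
  by move: IH; nra.
have K0 : 0 <= K / (r - 1).
  have := rK 0%N; rewrite expn0 expr1 => rK0.
  apply: divr_ge0; last by rewrite subr_ge0 ltW.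
  by apply: le_trans rK0; apply: ltW (lt_trans _ r1).
have := archi_boundP K0; set n := Num.bound _ => hn.
have := rK n; have := bernoulli (2 ^ n)%N.
have : (n%:R : R) <= (2 ^ n)%N%:R by rewrite ler_nat ltnW // ltn_expl.
move: hn; rewrite ltr_pdivrMr ?subr_gt0 // => hn.
have : 0 <= (n%:R : R) by rewrite ler0n.
nra.
Qed.

Fixpoint half_sqr_iter n : R :=
  if n is n'.+1 then (1 + half_sqr_iter n' ^+ 2) / 2 else 0.

Lemma half_sqr_iter_ge0 n : 0 <= half_sqr_iter n.
Proof. by case: n => //= n; rewrite divr_ge0 // addr_ge0 ?sqr_ge0. Qed.

Lemma half_sqr_iter_le1 n : half_sqr_iter n <= 1.
Proof.
elim: n => [|n IH] /=; first exact: ler01.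
have : half_sqr_iter n ^+ 2 <= 1 by rewrite expr_le1 // half_sqr_iter_ge0.
by set r := half_sqr_iter n; lra.
Qed.

(* Equivalently [1 / (1 - r_n) >= (n + 2) / 2]: the reciprocal of the gap
   grows by at least [1/2] at each step. *)
Lemma half_sqr_iter_gap n : (1 - half_sqr_iter n) * n.+2%:R <= 2.
Proof.
elim: n => [|n IH]; first by rewrite subr0 mul1r.
have e0 : 0 <= 1 - half_sqr_iter n by rewrite subr_ge0 half_sqr_iter_le1.
have e1 : 1 - half_sqr_iter n <= 1 by rewrite lerBlDr lerDl half_sqr_iter_ge0.
have -> : 1 - half_sqr_iter n.+1 = (1 - half_sqr_iter n) - (1 - half_sqr_iter n) ^+ 2 / 2.
  by rewrite /=; field.
rewrite -[n.+3]addn1 natrD.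
move: IH e0 e1; set e := 1 - _; set k : R := n.+2%:R => IH e0 e1.
have : 0 <= (2 - e * k) * (1 - e / 2) by rewrite mulr_ge0 // subr_ge0 // ?IH //; lra.
have := sqr_ge0 e; have : 0 <= k by rewrite ler0n.
nra.
Qed.
End Scalars.
Lemma big_uniq_subset {I : eqType} {V : nmodType} {F H : seq I} (f : I -> V) :
  uniq F -> uniq H -> {subset H <= F} ->
  \sum_(i <- F) f i = \sum_(i <- H) f i + \sum_(i <- F | i \notin H) f i.
Proof.
move=> uF uH sHF; rewrite (bigID (mem H)) /= -big_filter; congr (_ + _).
apply/perm_big/uniq_perm; rewrite ?filter_uniq // => i.
by rewrite mem_filter andb_idr //; apply: sHF.
Qed.

Section OrderedGroup.
Context {G : zmodType} {le : rel G}.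
Hypothesis HT : is_toag le.

Lemma nonneg_opp_eq0 {x} : le 0 x -> le 0 (- x) -> x = 0.
Proof.
move=> x0 Nx0; have := tg_transl HT x Nx0; rewrite add0r addNr => x_le0.
exact: (tg_anti HT x_le0 x0).
Qed.

Lemma opp_nonneg {x} : ~ le 0 x -> le 0 (- x).
Proof.
move=> x_neg; have := tg_total HT 0 x; rewrite (introF idP x_neg) /= => x_le0.
by have := tg_transl HT (- x) x_le0; rewrite subrr add0r.
Qed.

Lemma pos_opp_not_nonneg {x} : glt le 0 x -> ~ le 0 (- x).
Proof. by case=> x0 x_neq0 /(nonneg_opp_eq0 x0) /esym. Qed.

End OrderedGroup.

Section CStarAlgebra.
Context {R : realType} {A : algType R[i]} {nrm : A -> R} {star : A -> A}.
Hypothesis HC : is_cstar nrm star.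

Local Notation rscale r a := (((r : R)%:C)%C *: a).
Let nrmD := cs_nrmD HC.
Let nrmM := cs_nrmM HC.
Let starD := cs_starD HC.
Let starM := cs_starM HC.
Let starK := cs_starK HC.

Lemma nrm_rscale r a : nrm (rscale r a) = `|r| * nrm a.
Proof. by rewrite (cs_nrmZ HC) normc_real. Qed.

Lemma nrmMn a n : nrm (a *+ n) = n%:R * nrm a.
Proof. by rewrite -scaler_nat -(rmorph_nat (real_complex R)) nrm_rscale normr_nat. Qed.

Lemma rscale_half_mulr2n (a : A) : rscale 2^-1 a *+ 2 = a.
Proof.
rewrite scalerMnl -(rmorphMn (real_complex R)) -mulr_natr mulVf ?pnatr_eq0 //.
by rewrite rmorph1 scale1r.
Qed.

Lemma mulr2nI (a b : A) : a *+ 2 = b *+ 2 -> a = b.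
Proof.
move=> /(congr1 (fun x => rscale 2^-1 x)).
by rewrite -!scalerMnr !rscale_half_mulr2n.
Qed.

Lemma nrm0 : nrm 0 = 0.
Proof. by rewrite -(scaler0 _ 0) nrm_rscale normr0 mul0r. Qed.

Lemma nrmN a : nrm (- a) = nrm a.
Proof. by rewrite -scaleN1r (cs_nrmZ HC) normcN1 mul1r. Qed.

Lemma nrm_distrC a b : nrm (a - b) = nrm (b - a).
Proof. by rewrite -nrmN opprB. Qed.

Lemma nrm_ge0 a : 0 <= nrm a.
Proof.
have := nrmD a (- a); rewrite subrr nrm0 nrmN.
by rewrite -mulr2n -mulr_natr pmulr_lge0.
Qed.

Lemma nrm_distD a b c : nrm (a - c) <= nrm (a - b) + nrm (b - c).
Proof. by apply: le_trans (nrmD _ _); rewrite addrA subrK. Qed.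

Lemma eq0_nrm_lt a : (forall e, 0 < e -> nrm a < e) -> a = 0.
Proof.
move=> small; apply: (cs_nrm_eq0 HC); apply/eqP; rewrite eq_le nrm_ge0 andbT.
by rewrite leNgt; apply/negP => /small; rewrite ltxx.
Qed.

Lemma ler_nrm_sum (I : Type) (s : seq I) (f : I -> A) :
  nrm (\sum_(i <- s) f i) <= \sum_(i <- s) nrm (f i).
Proof.
elim: s => [|x s IH]; first by rewrite !big_nil nrm0.
by rewrite !big_cons; apply: le_trans (nrmD _ _) _; rewrite lerD2l.
Qed.

Lemma nrmM_le {a b u v} : nrm a <= u -> nrm b <= v -> nrm (a * b) <= u * v.
Proof. by move=> au bv; apply: le_trans (nrmM _ _) _; rewrite ler_pM ?nrm_ge0. Qed.

Lemma star0 : star 0 = 0.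
Proof. by apply: (addrI (star 0)); rewrite -starD !addr0. Qed.

Lemma starN a : star (- a) = - star a.
Proof. by apply: (addrI (star a)); rewrite -starD !subrr star0. Qed.

Lemma starB a b : star (a - b) = star a - star b.
Proof. by rewrite starD starN. Qed.

Lemma starMn a n : star (a *+ n) = star a *+ n.
Proof. by elim: n => [|n IH]; rewrite ?mulr0n ?star0 // !mulrS starD IH. Qed.

Lemma star1 : star 1 = 1.
Proof. by have := starM (star 1) 1; rewrite mulr1 starK mulr1 => <-. Qed.

Lemma star_rscale r a : star (rscale r a) = rscale r (star a).
Proof. by rewrite (cs_starZ HC) [_^*](conjc_real r). Qed.

Lemma nrm_star a : nrm (star a) = nrm a.
Proof.
have le_star b : nrm b <= nrm (star b).
  have [b0|b0] := eqVneq (nrm b) 0; first by rewrite b0 nrm_ge0.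
  have := nrmM (star b) b; rewrite (cs_cstar_id HC) expr2.
  by rewrite ler_pM2r // lt_def b0 nrm_ge0.
by apply/eqP; rewrite eq_le le_star -{2}(starK a) le_star.
Qed.

Lemma nrm_proj_le1 p : star p = p -> p * p = p -> nrm p <= 1.
Proof.
move=> sp pp; have := cs_cstar_id HC p; rewrite sp pp expr2.
have [->|p0] := eqVneq (nrm p) 0; first by rewrite ler01.
by rewrite -{1}(mulr1 (nrm p)) => /(mulfI p0) <-.
Qed.

Lemma cpos_sa a : cpos star a -> star a = a.
Proof. by case=> b ->; rewrite starM starK. Qed.

Definition nrm_cvg (u : nat -> A) (l : A) :=
  forall e, 0 < e -> exists N, forall n, (N <= n)%N -> nrm (u n - l) < e.

Lemma nrm_cvg_unique {u l l'} : nrm_cvg u l -> nrm_cvg u l' -> l = l'.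
Proof.
move=> ul ul'; apply/eqP; rewrite -subr_eq0; apply/eqP/eq0_nrm_lt => e e0.
have e2 : 0 < e / 2 by rewrite divr_gt0.
have [N1 H1] := ul _ e2; have [N2 H2] := ul' _ e2.
have := H1 _ (leq_maxl N1 N2); have := H2 _ (leq_maxr N1 N2).
set x := u _ => q2 q1.
by apply: le_lt_trans (nrm_distD _ x _) _; rewrite nrm_distrC [e]splitr ltrD.
Qed.

Lemma nrm_cvg_lipschitz {u l v m} K : nrm_cvg u l ->
  (forall n, nrm (v n - m) <= K * nrm (u n - l)) -> nrm_cvg v m.
Proof.
move=> ul hv e e0.
have K1 : 0 < `|K| + 1 by rewrite ltr_wpDl.
have [N HN] := ul _ (divr_gt0 e0 K1); exists N => n /HN h.
apply: le_lt_trans (hv n) _; apply: le_lt_trans (_ : _ <= (`|K| + 1) * nrm (u n - l)) _.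
  by rewrite ler_wpM2r ?nrm_ge0 // (le_trans (ler_norm K)) // lerDl.
by rewrite mulrC -ltr_pdivlMr.
Qed.

Lemma nrm_cvg_of_cauchy u c :
  (forall n m, (n <= m)%N -> nrm (u m - u n) <= c / n.+1%:R) -> exists l, nrm_cvg u l.
Proof.
move=> uc; apply: (cs_complete HC) => e /(div_succ_lt_eventually c) [N small].
exists N => m n Hm Hn; case: (leqP n m) => nm.
  exact: le_lt_trans (uc _ _ nm) (small _ Hn).
by rewrite nrm_distrC; apply: le_lt_trans (uc _ _ (ltnW nm)) (small _ Hm).
Qed.

Section SquareRoot.
Variable t : A.
Hypotheses (t_sa : star t = t) (t_le1 : nrm t <= 1).

(* The iteration converges to [1 - sqrt (1 - t)]; it is dominated termwise by
   its scalar case [t = 1], which converges at rate [2 / (n + 2)]. *)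
Fixpoint sqrt_iter n : A :=
  if n is n'.+1 then rscale 2^-1 (t + sqrt_iter n' * sqrt_iter n') else 0.

Local Notation y := sqrt_iter.
Local Notation r := (@half_sqr_iter R).

Lemma sqrt_iterS_sub n : y n.+2 - y n.+1 =
  rscale 2^-1 ((y n.+1 - y n) * y n.+1 + y n * (y n.+1 - y n)).
Proof. by rewrite /= -scalerBr mulrBl mulrBr addrA subrK opprD addrACA subrr add0r. Qed.

Lemma nrm_sqrt_iter n : nrm (y n) <= r n.
Proof.
elim: n => [|n IH] /=; first by rewrite nrm0.
rewrite nrm_rscale ger0_norm ?invr_ge0 // mulrC ler_pM2r ?invr_gt0 // expr2.
by apply: le_trans (nrmD _ _) _; rewrite lerD // nrmM_le.
Qed.

Lemma nrm_sqrt_iterS n : nrm (y n.+1 - y n) <= r n.+1 - r n.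
Proof.
elim: n => [|n IH].
  rewrite /= !subr0 mulr0 addr0 expr0n addr0 nrm_rscale ger0_norm ?invr_ge0 //.
  by rewrite mulrC ler_pM2r ?invr_gt0.
rewrite sqrt_iterS_sub nrm_rscale ger0_norm ?invr_ge0 //.
have -> : r n.+2 - r n.+1 = 2^-1 * ((r n.+1 - r n) * r n.+1 + r n * (r n.+1 - r n)).
  by rewrite /=; set x := r n; field.
rewrite ler_pM2l ?invr_gt0 //; apply: le_trans (nrmD _ _) _.
by rewrite lerD // nrmM_le // nrm_sqrt_iter.
Qed.

Lemma nrm_sqrt_iter_sub n m : (n <= m)%N -> nrm (y m - y n) <= 2 / n.+1%:R.
Proof.
move=> /subnK <-.
have telescope k : nrm (y (k + n) - y n) <= r (k + n) - r n.
  elim: k => [|k IH]; first by rewrite add0n !subrr nrm0.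
  apply: le_trans (nrm_distD _ (y (k + n)) _) _.
  rewrite addSn -[r (k + n).+1 - _](subrKA (r (k + n))) lerD //.
  exact: nrm_sqrt_iterS.
apply: le_trans (telescope _) _.
apply: le_trans (_ : _ <= 1 - r n) _; first by rewrite lerD2r half_sqr_iter_le1.
apply: le_trans (_ : _ <= 2 / n.+2%:R) _.
  by rewrite ler_pdivlMr // half_sqr_iter_gap.
by rewrite ler_pM2l // lef_pV2 ?posrE // ler_nat.
Qed.

Lemma sqrt_iter_cvg : exists l, nrm_cvg y l.
Proof. exact: nrm_cvg_of_cauchy nrm_sqrt_iter_sub. Qed.

Lemma sqrt_iter_sa n : star (y n) = y n.
Proof. by elim: n => [|n IH] /=; rewrite ?star0 // star_rscale starD starM IH t_sa. Qed.

Lemma sqrt_iter_comm x n : GRing.comm x t -> GRing.comm x (y n).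
Proof.
move=> xt; elim: n => [|n IH] /=; first by rewrite /GRing.comm mulr0 mul0r.
by rewrite /GRing.comm -scalerAr -scalerAl mulrDr mulrDl xt mulrA IH -mulrA IH mulrA.
Qed.

Section Limit.
Context {l : A}.
Hypothesis y_l : nrm_cvg y l.

Lemma sqrt_iter_lim_sa : star l = l.
Proof.
apply/esym/(nrm_cvg_unique y_l)/(nrm_cvg_lipschitz 1 y_l) => n.
by rewrite mul1r -{1}sqrt_iter_sa -starB nrm_star.
Qed.

Lemma sqrt_iter_lim_comm x : GRing.comm x t -> GRing.comm x l.
Proof.
move=> xt; apply: (nrm_cvg_unique (u := fun n => x * y n)).
  by apply: (nrm_cvg_lipschitz (nrm x) y_l) => n; rewrite -mulrBr nrmM.
apply: (nrm_cvg_lipschitz (nrm x) y_l) => n.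
by rewrite sqrt_iter_comm // -mulrBl mulrC nrmM.
Qed.

Lemma sqrt_iter_lim_fix : l *+ 2 = t + l * l.
Proof.
have y_le1 n : nrm (y n) <= 1 := le_trans (nrm_sqrt_iter n) (half_sqr_iter_le1 n).
have ySl : nrm_cvg (fun n => y n.+1) l.
  by move=> e /y_l [N HN]; exists N => n /leqW /HN.
have lipschitz n : nrm (y n.+1 - rscale 2^-1 (t + l * l)) <=
    2^-1 * (1 + nrm l) * nrm (y n - l).
  rewrite /= -scalerBr nrm_rscale ger0_norm ?invr_ge0 // -mulrA ler_pM2l ?invr_gt0 //.
  rewrite opprD addrACA subrr add0r mulrDl mul1r.
  rewrite -[y n * y n](subrK (l * y n)) -mulrBl -addrA -mulrBr.
  apply: le_trans (nrmD _ _) _.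
  by rewrite lerD ?nrmM // -[X in _ <= X]mulr1 nrmM_le.
have l_eq : l = rscale 2^-1 (t + l * l).
  exact: nrm_cvg_unique ySl (nrm_cvg_lipschitz _ y_l lipschitz).
by rewrite {1}l_eq rscale_half_mulr2n.
Qed.

End Limit.

Lemma exists_sqrt_one_sub : exists s,
  [/\ star s = s, s * s = 1 - t & forall x, GRing.comm x t -> GRing.comm x s].
Proof.
have [l y_l] := sqrt_iter_cvg; exists (1 - l); split.
- by rewrite starB star1 (sqrt_iter_lim_sa y_l).
- have ll : l * l = l *+ 2 - t by rewrite (sqrt_iter_lim_fix y_l) addrAC subrr add0r.
  rewrite mulrBl mul1r mulrBr mulr1 ll mulr2n !opprB addrA -addrA (addrAC (l + l)).
  by rewrite addrK addrA subrK.
- move=> x xt; rewrite /GRing.comm mulrBr mulrBl mulr1 mul1r.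
  by rewrite (sqrt_iter_lim_comm y_l).
Qed.

End SquareRoot.

Lemma cpos_one_sub {t} : star t = t -> nrm t <= 1 -> cpos star (1 - t).
Proof.
move=> t_sa t_le1; have [s [s_sa <- _]] := exists_sqrt_one_sub _ t_sa t_le1.
by exists s; rewrite s_sa.
Qed.

Section StarEndomorphism.
Context {f : A -> A}.
Hypothesis Hf : is_star_endo star f.

Lemma endo0 : f 0 = 0.
Proof. by apply: (addrI (f 0)); rewrite -(se_add Hf) !addr0. Qed.

Lemma nrm_endo1_le1 : nrm (f 1) <= 1.
Proof. by apply: nrm_proj_le1; rewrite -?(se_star Hf) -?(se_mul Hf) ?star1 ?mulr1. Qed.

Lemma nrm_endo_unitary_le1 u : star u * u = 1 -> nrm (f u) <= 1.
Proof.
move=> uu; rewrite -(@expr_le1 _ 2) ?nrm_ge0 // -(cs_cstar_id HC).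
by rewrite -(se_star Hf) -(se_mul Hf) uu nrm_endo1_le1.
Qed.

(* [h] is the real part of the unitary [h + i sqrt(1 - h^2)]. *)
Lemma nrm_endo_sa_le1 {h} : star h = h -> nrm h <= 1 -> nrm (f h) <= 1.
Proof.
move=> h_sa h_le1.
have hh_sa : star (h * h) = h * h by rewrite starM h_sa.
have hh_le1 : nrm (h * h) <= 1 by rewrite -(mulr1 1) nrmM_le.
have [s [s_sa ss s_comm]] := exists_sqrt_one_sub _ hh_sa hh_le1.
have hs : GRing.comm h s by apply: s_comm; rewrite /GRing.comm mulrA.
pose u := h + 'i%C *: s.
have u_star : star u = h - 'i%C *: s.
  by rewrite starD (cs_starZ HC) conjc_i s_sa scaleNr h_sa.
have uu : star u * u = 1.
  rewrite u_star mulrDr !mulrBl -!scalerAl -!scalerAr scalerA mulii scaleN1r.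
  by rewrite ss hs opprK addrA subrK addrC subrK.
have fh2 : f u + star (f u) = f h *+ 2.
  by rewrite -(se_star Hf) -(se_add Hf) u_star /u addrACA subrr addr0 (se_add Hf).
have : nrm (f h *+ 2) <= 2.
  rewrite -fh2; apply: le_trans (nrmD _ _) _.
  by rewrite nrm_star; apply: lerD; apply: nrm_endo_unitary_le1.
by rewrite nrmMn -[X in _ <= X]mulr1 ler_pM2l.
Qed.

Lemma nrm_endo_le a : nrm (f a) <= nrm a.
Proof.
have [a0|a0] := eqVneq (nrm a) 0; first by rewrite (cs_nrm_eq0 HC a0) endo0 nrm0.
have a2_gt0 : 0 < nrm a ^+ 2 by rewrite exprn_gt0 // lt_def a0 nrm_ge0.
pose h := rscale (nrm a ^+ 2)^-1 (star a * a).
have h_sa : star h = h by rewrite star_rscale starM starK.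
have h_le1 : nrm h <= 1.
  rewrite nrm_rscale (cs_cstar_id HC) ger0_norm; last by rewrite invr_ge0 ltW.
  by rewrite mulVf // gt_eqF.
have := nrm_endo_sa_le1 h_sa h_le1.
rewrite (se_scale Hf) (se_mul Hf) (se_star Hf) nrm_rscale (cs_cstar_id HC).
rewrite ger0_norm; last by rewrite invr_ge0 ltW.
rewrite mulrC ler_pdivrMr // mul1r => fa2_le.
by rewrite -ler_sqr ?nnegrE ?nrm_ge0.
Qed.

End StarEndomorphism.

Section TransferOperator.
Context {f l : A -> A}.
Hypothesis Hf : is_star_endo star f.
Hypothesis l_add : {morph l : a b / a + b}.
Hypothesis l_scale : forall (c : R[i]) a, l (c *: a) = c *: l a.
Hypothesis l_bounded : exists K : R, forall a, nrm (l a) <= K * nrm a.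
Hypothesis l_pos : forall a, cpos star a -> cpos star (l a).
Hypothesis l_module : forall a b, l (f a * b) = a * l b.
Hypothesis l_cond : forall a, f (l a) = f 1 * a * f 1.

Lemma transfer0 : l 0 = 0.
Proof. by apply: (addrI (l 0)); rewrite -l_add !addr0. Qed.

Lemma transferN a : l (- a) = - l a.
Proof. by apply: (addrI (l a)); rewrite -l_add !subrr transfer0. Qed.

Lemma transferB a b : l (a - b) = l a - l b.
Proof. by rewrite l_add transferN. Qed.

(* For [nrm k <= 1], [l k *+ 2 = l (1 - - k) - l (1 - k)] is a difference of
   positive elements. *)
Lemma transfer_sa h : star h = h -> star (l h) = l h.
Proof.
move=> h_sa; have [h0|h0] := eqVneq (nrm h) 0.
  by rewrite (cs_nrm_eq0 HC h0) transfer0 star0.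
pose k := rscale (nrm h)^-1 h.
have k_sa : star k = k by rewrite star_rscale h_sa.
have k_le1 : nrm k <= 1.
  by rewrite nrm_rscale ger0_norm ?invr_ge0 ?nrm_ge0 // mulVf.
have lk_sa : star (l k) = l k.
  have kN_sa : star (- k) = - k by rewrite starN k_sa.
  have kN_le1 : nrm (- k) <= 1 by rewrite nrmN.
  have /l_pos/cpos_sa p_sa := cpos_one_sub kN_sa kN_le1.
  have /l_pos/cpos_sa m_sa := cpos_one_sub k_sa k_le1.
  have e : l (1 - - k) - l (1 - k) = l k *+ 2.
    by rewrite !transferB transferN opprK opprB addrC addrA subrK mulr2n.
  by apply: mulr2nI; rewrite -starMn -e starB p_sa m_sa.
have -> : h = rscale (nrm h) k by rewrite scalerA -rmorphM mulfV // scale1r.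
by rewrite l_scale star_rscale lk_sa.
Qed.

Lemma transfer_star a : star (l a) = l (star a).
Proof.
set h := a + star a; set k := 'i%C *: (star a - a).
have h_sa : star h = h by rewrite starD starK addrC.
have k_sa : star k = k.
  by rewrite (cs_starZ HC) conjc_i starB starK scaleNr -scalerN opprB.
have ik : 'i%C *: k = a - star a by rewrite scalerA mulii scaleN1r opprB.
have l_mulr2n b : l (b *+ 2) = l b *+ 2 by rewrite !mulr2n l_add.
have a2 : a *+ 2 = h + 'i%C *: k by rewrite ik addrACA subrr addr0.
have sa2 : star a *+ 2 = h - 'i%C *: k.
  by rewrite ik opprB [h]addrC addrACA subrr addr0.
apply: mulr2nI; rewrite -starMn -!l_mulr2n a2 sa2 l_add transferB l_scale.
by rewrite starD (cs_starZ HC) conjc_i !transfer_sa // scaleNr.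
Qed.

Lemma transfer_rmodule b e : l (b * f e) = l b * e.
Proof.
rewrite -[l _]starK transfer_star starM -(se_star Hf) l_module.
by rewrite starM -transfer_star !starK.
Qed.

Lemma nrm_compress v : nrm (f 1 * v * f 1) <= nrm v.
Proof.
have f1_le1 := nrm_endo1_le1 Hf.
apply: le_trans (nrmM _ _) _; apply: le_trans (ler_piMr (nrm_ge0 _) f1_le1) _.
by apply: le_trans (nrmM _ _) _; apply: ler_piMl (nrm_ge0 _) f1_le1.
Qed.

(* With [c = l v], [c * l 1 = c], hence [star c * c = l (f (star c * c))] and
   [f c = f 1 * v * f 1]. *)
Lemma nrm_transfer_sqr_le v :
  nrm (l v) ^+ 2 <= nrm (l (star (f 1 * v * f 1) * (f 1 * v * f 1))).
Proof.
set c := l v.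
have c1 : c * l 1 = c.
  by rewrite -l_module /c l_cond mulr1 -mulrA l_module mul1r transfer_rmodule mulr1.
have cc : star c * c = l (f (star c * c)) by rewrite -[f _]mulr1 l_module -mulrA c1.
by rewrite -(cs_cstar_id HC) cc (se_mul Hf) (se_star Hf) /c l_cond.
Qed.

Lemma nrm_transfer_pow2_le {K} : 0 <= K -> (forall a, nrm (l a) <= K * nrm a) ->
  forall n v, nrm (l v) ^+ (2 ^ n) <= K * nrm v ^+ (2 ^ n).
Proof.
move=> K0 lK; elim=> [|n IH] v; first by rewrite !expr1.
rewrite expnS !exprM.
apply: le_trans (_ : _ <= nrm (l (star (f 1 * v * f 1) * (f 1 * v * f 1))) ^+ (2 ^ n)) _.
  by rewrite lerXn2r ?nnegrE ?exprn_ge0 ?nrm_ge0 // nrm_transfer_sqr_le.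
apply: le_trans (IH _) _; rewrite ler_wpM2l // (cs_cstar_id HC).
rewrite lerXn2r ?nnegrE ?exprn_ge0 ?nrm_ge0 //.
by rewrite lerXn2r ?nnegrE ?nrm_ge0 // nrm_compress.
Qed.

Lemma nrm_transfer_le w : nrm (l w) <= nrm w.
Proof.
have [w0|w0] := eqVneq (nrm w) 0; first by rewrite (cs_nrm_eq0 HC w0) transfer0 nrm0.
have [K lK] := l_bounded.
have lK' a : nrm (l a) <= `|K| * nrm a.
  by apply: le_trans (lK a) _; rewrite ler_wpM2r ?nrm_ge0 ?ler_norm.
apply: (le_of_pow2_bound (nrm_ge0 _)); first by rewrite lt_def w0 nrm_ge0.
by move=> n; apply: (nrm_transfer_pow2_le (normr_ge0 K) lK').
Qed.

End TransferOperator.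

Section Summation.
Context {I : eqType} {P : I -> Prop}.
Implicit Types (f : I -> A) (F : seq I).

Lemma has_sum_fsum {f} : Defs.summable nrm P f -> has_sum nrm P f (fsum nrm P f).
Proof. by rewrite /fsum; case: pselect => // h _; exact: (projT2 (cid h)). Qed.

Lemma has_sum_approx {f s e} : has_sum nrm P f s -> 0 < e ->
  exists F, [/\ uniq F, forall i, i \in F -> P i &
     nrm (\sum_(i <- F) f i - s) < e].
Proof.
move=> fs /fs [F0 [F0P HF0]]; exists (undup F0).
have uP i : i \in undup F0 -> P i by rewrite mem_undup => /F0P.
by split; rewrite ?undup_uniq // HF0 ?undup_uniq // => i; rewrite mem_undup.
Qed.

Lemma has_sum_nrm_le {f s e} : has_sum nrm P f s -> 0 < e ->
  exists F, [/\ uniq F, forall i, i \in F -> P i &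
     nrm s <= \sum_(i <- F) nrm (f i) + e].
Proof.
move=> fs /(has_sum_approx fs) [F [uF FP Fs]]; exists F; split => //.
set u := \sum_(i <- F) f i in Fs *.
have su : s = u - (u - s) by rewrite opprB addrC subrK.
rewrite {1}su; apply: le_trans (nrmD _ _) _.
by rewrite nrmN lerD ?ler_nrm_sum // ltW.
Qed.

Lemma has_sum_fixed {f s} (T : A -> A) : has_sum nrm P f s ->
  {morph T : x y / x + y} -> (forall x, nrm (T x) <= nrm x) ->
  (forall i, P i -> T (f i) = f i) -> T s = s.
Proof.
move=> fs T_add T_le Tf; apply/eqP; rewrite -subr_eq0; apply/eqP/eq0_nrm_lt => e e0.
have [F [_ FP Fs]] := has_sum_approx fs (divr_gt0 e0 (ltr0n _ 2)).
have T0 : T 0 = 0 by apply: (addrI (T 0)); rewrite -T_add !addr0.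
have TF : T (\sum_(i <- F) f i) = \sum_(i <- F) f i.
  rewrite (big_morph T T_add T0) big_seq [RHS]big_seq.
  by apply: eq_bigr => i /FP/Tf.
set u := \sum_(i <- F) f i in Fs TF.
have TN x : T (- x) = - T x by apply: (addrI (T x)); rewrite -T_add !subrr T0.
have -> : T s - s = T (s - u) + (u - s) by rewrite T_add TN TF addrA subrK.
apply: le_lt_trans (nrmD _ _) _; rewrite [e]splitr ltrD //.
by apply: le_lt_trans (T_le _) _; rewrite nrm_distrC.
Qed.

Lemma fsum_mulr_fixed {f p} : nrm p <= 1 -> (forall i, P i -> f i * p = f i) ->
  fsum nrm P f * p = fsum nrm P f.
Proof.
move=> p_le1 fp; rewrite /fsum; case: pselect => [fs|_]; last by rewrite mul0r.
apply: (has_sum_fixed (fun x => x * p) (projT2 (cid fs))) => [x y|x|//].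
  exact: mulrDl.
by rewrite -[X in _ <= X]mulr1 nrmM_le.
Qed.

Lemma fsum_mull_fixed {f p} : nrm p <= 1 -> (forall i, P i -> p * f i = f i) ->
  p * fsum nrm P f = fsum nrm P f.
Proof.
move=> p_le1 fp; rewrite /fsum; case: pselect => [fs|_]; last by rewrite mulr0.
apply: (has_sum_fixed (fun x => p * x) (projT2 (cid fs))) => [x y|x|//].
  exact: mulrDr.
by rewrite -[X in _ <= X]mul1r nrmM_le.
Qed.

Lemma sum_dominated_tail {w : I -> R} {B} :
  (forall F, uniq F -> {in F, forall i, P i} -> \sum_(i <- F) w i <= B) ->
  forall e, 0 < e -> exists F0, [/\ uniq F0, {in F0, forall i, P i} &
    forall F, uniq F -> {in F, forall i, P i} -> {in F, forall i, i \notin F0} ->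
      \sum_(i <- F) w i < e].
Proof.
move=> wB e e0.
pose S : set R := fun x =>
  exists F, [/\ uniq F, {in F, forall i, P i} & x = \sum_(i <- F) w i].
have S_sup : has_sup S.
  split; first by exists 0, [::]; rewrite big_nil.
  by exists B => _ [F [uF FP ->]]; apply: wB.
have [_ [F0 [uF0 F0P ->]] F0_near] := sup_adherent e0 S_sup.
exists F0; split => // F uF FP F_F0.
have uF0F : uniq (F0 ++ F).
  by rewrite cat_uniq uF0 uF andbT; apply/hasPn => i /F_F0.
have : \sum_(i <- F0 ++ F) w i <= sup S.
  apply: sup_upper_bound => //; exists (F0 ++ F); split => // i.
  by rewrite mem_cat => /orP [/F0P|/FP].
by rewrite big_cat /=; move: F0_near; lra.
Qed.

Lemma summable_of_cauchy f :
  (forall e, 0 < e -> exists F0, [/\ uniq F0, {in F0, forall i, P i} &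
     forall F, uniq F -> {in F, forall i, P i} -> {in F, forall i, i \notin F0} ->
       nrm (\sum_(i <- F) f i) < e]) ->
  Defs.summable nrm P f.
Proof.
move=> cauchy.
have inv_gt0 n : 0 < n.+1%:R^-1 :> R by rewrite invr_gt0.
have [F0 F0_tail] := choice (fun n => cauchy _ (inv_gt0 n)).
pose H n := undup (flatten [seq F0 k | k <- iota 0 n.+1]).
have memH n i : reflect (exists2 k, (k <= n)%N & i \in F0 k) (i \in H n).
  rewrite mem_undup; apply: (iffP flatten_mapP) => -[k].
    by rewrite mem_iota ltnS => kn ik; exists k.
  by move=> kn ik; exists k; rewrite // mem_iota ltnS.
have HP n : {in H n, forall i, P i}.
  by move=> i /memH [k _]; have [_ F0P _] := F0_tail k; apply: F0P.
have H_tail n F : uniq F -> {in F, forall i, P i} -> {subset H n <= F} ->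
    nrm (\sum_(i <- F) f i - \sum_(i <- H n) f i) < n.+1%:R^-1.
  move=> uF FP HF; rewrite (big_uniq_subset _ uF (undup_uniq _) HF) addrAC subrr add0r.
  have [_ _ tail] := F0_tail n; rewrite -big_filter; apply: tail.
  - exact: filter_uniq.
  - by move=> i; rewrite mem_filter => /andP [_ /FP].
  - move=> i; rewrite mem_filter => /andP [iH _]; apply: contra iH => iF0.
    by apply/memH; exists n.
have [l Hl] : exists l, nrm_cvg (fun n => \sum_(i <- H n) f i) l.
  apply: (nrm_cvg_of_cauchy _ 1) => n m nm; rewrite mul1r ltW // H_tail ?undup_uniq //.
  by move=> i /memH [k kn ik]; apply/memH; exists k => //; apply: leq_trans nm.
exists l => e e0; have e2 : 0 < e / 2 by rewrite divr_gt0.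
have [N1 small] := div_succ_lt_eventually 1 e2; have [N2 HN2] := Hl _ e2.
exists (H (maxn N1 N2)); split=> [|F uF FP HF]; first exact: HP.
apply: le_lt_trans (nrm_distD _ (\sum_(i <- H (maxn N1 N2)) f i) _) _.
rewrite [e]splitr ltrD ?HN2 ?leq_maxr //.
by apply: lt_trans (H_tail _ _ uF FP HF) _; rewrite -[_^-1]mul1r small ?leq_maxl.
Qed.

Lemma summable_dominated {f} (w : I -> R) B :
  (forall i, P i -> nrm (f i) <= w i) ->
  (forall F, uniq F -> {in F, forall i, P i} -> \sum_(i <- F) w i <= B) ->
  Defs.summable nrm P f.
Proof.
move=> fw wB; apply: summable_of_cauchy => e /(sum_dominated_tail wB) [F0 [uF0 F0P tail]].
exists F0; split => // F uF FP F_F0.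
apply: le_lt_trans (tail F uF FP F_F0); apply: le_trans (ler_nrm_sum _ _ _) _.
by rewrite big_seq [X in _ <= X]big_seq ler_sum // => i /FP /fw.
Qed.

End Summation.

Lemma l1norm_finite {G : zmodType} {c : G -> A} : (l1norm nrm c < +oo)%E ->
  exists n : R, l1norm nrm c = n%:E /\
    forall F, uniq F -> \sum_(i <- F) nrm (c i) <= n.
Proof.
move=> c_fin.
have c_ge0 : (0 <= l1norm nrm c)%E by apply: esum_ge0 => x _; rewrite lee_fin nrm_ge0.
have c_num : l1norm nrm c \is a fin_num by rewrite ge0_fin_numE.
exists (fine (l1norm nrm c)); split; first by rewrite fineK.
move=> F uF; rewrite -lee_fin fineK // -sumEFin fsbig_seq //.
by apply: esum_ge; exists [set` F]%classic => //; split => //; exact: finite_seq.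
Qed.

Section L1Product.
Context {G : zmodType} {le : rel G} {alpha L : G -> A -> A}.
Hypotheses (HT : is_toag le) (HE : is_endo_action star le alpha)
  (HL : is_transfer_action nrm star le alpha L).

Lemma nrm_alpha_le x c : le 0 x -> nrm (alpha x c) <= nrm c.
Proof. by move=> x0; apply: nrm_endo_le (ea_endo HE x0) c. Qed.

Lemma nrm_transfer_action_le x w : le 0 x -> nrm (L x w) <= nrm w.
Proof.
move=> x0; exact: (nrm_transfer_le (ea_endo HE x0) (ta_add HL x0) (ta_scale HL x0)
  (ta_cont HL x0) (ta_pos HL x0) (ta_module HL x0) (ta_cond HL x0)).
Qed.

Lemma transfer_action_rmodule x w c : le 0 x -> L x (w * alpha x c) = L x w * c.
Proof.
move=> x0; exact: (transfer_rmodule (ea_endo HE x0) (ta_add HL x0) (ta_scale HL x0)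
  (ta_pos HL x0) (ta_module HL x0)).
Qed.

Lemma alpha1_idem x : le 0 x -> alpha x 1 * alpha x 1 = alpha x 1.
Proof. by move=> x0; rewrite -(se_mul (ea_endo HE x0)) mulr1. Qed.

Lemma nrm_alpha1_le1 x : le 0 x -> nrm (alpha x 1) <= 1.
Proof. by move=> x0; apply: nrm_endo1_le1 (ea_endo HE x0). Qed.

Lemma in_l1_mulr_alpha1 {c} : in_l1 nrm le alpha c ->
  forall x, le 0 x -> c x * alpha x 1 = c x.
Proof.
by case=> c_supp _ x x0; have [[d ->] _] := c_supp x x0; rewrite -mulrA alpha1_idem.
Qed.

Lemma in_l1_alpha1_mull {c} : in_l1 nrm le alpha c ->
  forall x, le 0 x -> alpha x 1 * c (- x) = c (- x).
Proof.
by case=> c_supp _ x x0; have [_ [d ->]] := c_supp x x0; rewrite mulrA alpha1_idem.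
Qed.

Context {a b : G -> A} {na nb : R}.
Hypothesis a_supp : forall x, le 0 x -> alpha x 1 * a (- x) = a (- x).
Hypothesis b_supp : forall x, le 0 x -> b x * alpha x 1 = b x.
Hypothesis a_bound : forall F, uniq F -> \sum_(i <- F) nrm (a i) <= na.
Hypothesis b_bound : forall F, uniq F -> \sum_(i <- F) nrm (b i) <= nb.

Definition weight (q : G * G) := nrm (a q.1) * nrm (b q.2).

(* [T] lies in the grid of its coordinates, over which the weight factorizes. *)
Lemma sum_weight_le T : uniq T -> \sum_(q <- T) weight q <= na * nb.
Proof.
move=> uT; pose U1 := undup (map fst T); pose U2 := undup (map snd T).
have uU : uniq [seq (x, y) | x <- U1, y <- U2].
  by apply: allpairs_uniq; rewrite ?undup_uniq // => -[? ?] [? ?].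
have TU : {subset T <= [seq (x, y) | x <- U1, y <- U2]}.
  move=> [x y] xyT; apply: (allpairs_f pair); rewrite mem_undup.
    by apply/mapP; exists (x, y).
  by apply/mapP; exists (x, y).
apply: le_trans (_ : _ <= \sum_(q <- [seq (x, y) | x <- U1, y <- U2]) weight q) _.
  rewrite (big_uniq_subset _ uU uT TU) lerDl.
  by apply: sumr_ge0 => q _; rewrite mulr_ge0 ?nrm_ge0.
rewrite big_allpairs /weight /=.
under eq_bigr do rewrite -big_distrr /=.
rewrite -big_distrl /= ler_pM ?a_bound ?b_bound ?undup_uniq //.
- by apply: sumr_ge0 => x _; apply: nrm_ge0.
- by apply: sumr_ge0 => y _; apply: nrm_ge0.
Qed.

Definition dominated_into (g : G) (P : G * G -> Prop) (s : G * G -> A)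
    (phi : G * G -> G * G) (Q : G * G -> Prop) :=
  injective phi /\ forall p, P p ->
    [/\ nrm (s p) <= weight (phi p), Q (phi p) & (phi p).1 + (phi p).2 = g].

Section Dominated.
Context {g : G} {P : G * G -> Prop} {s : G * G -> A}.
Context {phi : G * G -> G * G} {Q : G * G -> Prop}.
Hypothesis s_dom : dominated_into g P s phi Q.

Lemma dominated_summable : Defs.summable nrm P s.
Proof.
have [phi_inj dom] := s_dom.
apply: (summable_dominated (fun p => weight (phi p)) (na * nb)) => [p /dom []//|F uF _].
by rewrite -(big_map phi xpredT weight) sum_weight_le // map_inj_uniq.
Qed.

Lemma dominated_fsum_approx {e} : 0 < e -> exists T,
  [/\ uniq T, {in T, forall q, Q q /\ q.1 + q.2 = g} &
      nrm (fsum nrm P s) <= \sum_(q <- T) weight q + e].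
Proof.
move=> e0; have [phi_inj dom] := s_dom.
have [F [uF FP Fs]] := has_sum_nrm_le (has_sum_fsum dominated_summable) e0.
exists (map phi F); split.
- by rewrite map_inj_uniq.
- by move=> _ /mapP [p /FP /dom [_ Qp sum_p] ->].
- apply: le_trans Fs _; rewrite lerD2r big_map big_seq [X in _ <= X]big_seq.
  by apply: ler_sum => p /FP /dom [].
Qed.

End Dominated.

Lemma fsum3_approx {g P1 P2 P3 s1 s2 s3 phi1 phi2 phi3 Q1 Q2 Q3 e} :
  dominated_into g P1 s1 phi1 Q1 -> dominated_into g P2 s2 phi2 Q2 ->
  dominated_into g P3 s3 phi3 Q3 ->
  (forall q, Q1 q -> ~ Q2 q) -> (forall q, Q1 q -> ~ Q3 q) ->
  (forall q, Q2 q -> ~ Q3 q) ->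
  0 < e -> exists T, [/\ uniq T, {in T, forall q, q.1 + q.2 = g} &
    nrm (fsum nrm P1 s1 + fsum nrm P2 s2 + fsum nrm P3 s3) <= \sum_(q <- T) weight q + e].
Proof.
move=> d1 d2 d3 Q12 Q13 Q23 e0; have e3 : 0 < e / 3%:R by rewrite divr_gt0.
have [T1 [u1 QT1 h1]] := dominated_fsum_approx d1 e3.
have [T2 [u2 QT2 h2]] := dominated_fsum_approx d2 e3.
have [T3 [u3 QT3 h3]] := dominated_fsum_approx d3 e3.
have disjoint (T T' : seq (G * G)) (Q Q' : G * G -> Prop) :
    {in T, forall q, Q q /\ q.1 + q.2 = g} -> {in T', forall q, Q' q /\ q.1 + q.2 = g} ->
    (forall q, Q q -> ~ Q' q) -> ~~ has (mem T) T'.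
  by move=> QT QT' QQ'; apply/hasPn => q /QT' [Q'q _]; apply/negP => /QT [/QQ'].
exists (T1 ++ T2 ++ T3); split.
- rewrite !cat_uniq has_cat negb_or u1 u2 u3 (disjoint _ _ _ _ QT1 QT2 Q12).
  by rewrite (disjoint _ _ _ _ QT1 QT3 Q13) (disjoint _ _ _ _ QT2 QT3 Q23).
- by move=> q; rewrite !mem_cat => /or3P [/QT1 []|/QT2 []|/QT3 []].
- rewrite !big_cat /=; move: h1 h2 h3.
  have := nrmD (fsum nrm P1 s1 + fsum nrm P2 s2) (fsum nrm P3 s3).
  have := nrmD (fsum nrm P1 s1) (fsum nrm P2 s2).
  lra.
Qed.

Definition opp1 (p : G * G) := (- p.1, p.2).
Definition opp2 (p : G * G) := (p.1, - p.2).
Definition opp12 (p : G * G) := (- p.1, - p.2).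

Lemma opp1_inj : injective opp1. Proof. by move=> [? ?] [? ?] [/oppr_inj -> ->]. Qed.
Lemma opp2_inj : injective opp2. Proof. by move=> [? ?] [? ?] [-> /oppr_inj ->]. Qed.
Lemma opp12_inj : injective opp12.
Proof. by move=> [? ?] [? ?] [/oppr_inj -> /oppr_inj ->]. Qed.

Definition pos_neg (q : G * G) := glt le 0 q.1 /\ glt le 0 (- q.2).
Definition neg_pos (q : G * G) := glt le 0 (- q.1) /\ glt le 0 q.2.
Definition nonneg_nonneg (q : G * G) := le 0 q.1 /\ le 0 q.2.
Definition nonpos_nonpos (q : G * G) := le 0 (- q.1) /\ le 0 (- q.2).

Lemma neg_not_nonneg {x} : glt le 0 (- x) -> ~ le 0 x.
Proof. by move=> /(pos_opp_not_nonneg HT); rewrite opprK. Qed.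

Lemma ser1_dominated g : le 0 g ->
  dominated_into g (dom1 le g) (ser1 alpha a b) opp2 pos_neg.
Proof.
move=> g0; split=> [|[x y] [x0 y0 /= g_eq]]; first exact: opp2_inj.
rewrite /ser1 /weight /pos_neg /= opprK -g_eq; split=> //.
by apply: nrmM_le => //; apply: nrm_alpha_le.
Qed.

Lemma ser2_dominated g : dominated_into g (dom2 le g) (ser2 L a b) opp1 neg_pos.
Proof.
split=> [|[x y] [x0 y0 /= ->]]; first exact: opp1_inj.
rewrite /ser2 /weight /neg_pos /= opprK addrC; split=> //.
by apply: le_trans (nrm_transfer_action_le _ _ x0.1) _; apply: nrmM.
Qed.

Lemma ser3_dominated g : dominated_into g (dom3 le g) (ser3 alpha a b) id nonneg_nonneg.
Proof.
split=> [//|[x y] [x0 y0 /= ->]]; split=> //.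
by apply: nrmM_le => //; apply: nrm_alpha_le.
Qed.

Lemma ser4_dominated g : ~ le 0 g ->
  dominated_into g (dom1 le g) (ser4 alpha a b) opp2 pos_neg.
Proof.
move=> /(opp_nonneg HT) g0; split=> [|[x y] [x0 y0 /= g_eq]]; first exact: opp2_inj.
rewrite /ser4 /weight /pos_neg /= opprK -g_eq; split=> //.
by apply: nrmM_le => //; apply: nrm_alpha_le; rewrite -opprB -g_eq.
Qed.

Lemma ser5_dominated g : dominated_into g (dom2 le g) (ser5 L a b) opp1 neg_pos.
Proof.
split=> [|[x y] [x0 y0 /= ->]]; first exact: opp1_inj.
rewrite /ser5 /weight /neg_pos /= opprK addrC; split=> //.
by apply: le_trans (nrm_transfer_action_le _ _ y0.1) _; apply: nrmM.
Qed.

Lemma ser6_dominated g :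
  dominated_into g (dom6 le g) (ser6 alpha a b) opp12 nonpos_nonpos.
Proof.
split=> [|[x y] [x0 y0 /= ->]]; first exact: opp12_inj.
rewrite /ser6 /weight /nonpos_nonpos /= !opprK; split=> //.
by apply: nrmM_le => //; apply: nrm_alpha_le.
Qed.

Lemma nrm_l1prod_approx g {e} : 0 < e -> exists T, [/\ uniq T,
  {in T, forall q, q.1 + q.2 = g} &
  nrm (l1prod nrm le alpha L a b g) <= \sum_(q <- T) weight q + e].
Proof.
move=> e0; rewrite /l1prod; case: pselect => g0 /=.
- apply: (fsum3_approx (ser1_dominated _ g0) (ser2_dominated g) (ser3_dominated g)) => //.
  + by move=> q [q1 _] [[q1' _] _]; exact: (pos_opp_not_nonneg HT q1 q1').
  + by move=> q [_ q2] [_ q2']; exact: (neg_not_nonneg q2 q2').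
  + by move=> q [q1 _] [q1' _]; exact: (neg_not_nonneg q1 q1').
- apply: (fsum3_approx (ser4_dominated _ g0) (ser5_dominated g) (ser6_dominated g)) => //.
  + by move=> q [q1 _] [[q1' _] _]; exact: (pos_opp_not_nonneg HT q1 q1').
  + by move=> q [q1 _] [q1' _]; exact: (pos_opp_not_nonneg HT q1 q1').
  + by move=> q [_ q2] [_ q2']; exact: (pos_opp_not_nonneg HT q2 q2').
Qed.

Lemma l1prod_series_summable : l1prod_series_converge nrm le alpha L a b.
Proof.
move=> g; split=> g0; split; apply: dominated_summable.
- exact: ser1_dominated g0.
- exact: ser2_dominated.
- exact: ser3_dominated.
- exact: ser4_dominated g0.
- exact: ser5_dominated.
- exact: ser6_dominated.
Qed.

Section Support.
Context {x : G}.
Hypothesis x0 : le 0 x.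

Lemma ser1_mulr_alpha1 p : dom1 le x p -> ser1 alpha a b p * alpha x 1 = ser1 alpha a b p.
Proof.
case: p => y z [_ _ /= x_eq]; rewrite /ser1 /= -x_eq -mulrA.
by rewrite -(se_mul (ea_endo HE x0)) mulr1.
Qed.

Lemma ser2_mulr_alpha1 p : dom2 le x p -> ser2 L a b p * alpha x 1 = ser2 L a b p.
Proof.
case: p => y z [[y0 _] [z0 _] /= x_eq]; rewrite /ser2 /= -transfer_action_rmodule //.
by rewrite (ea_comp HE y0 x0) x_eq addrC subrK -mulrA b_supp.
Qed.

Lemma ser3_mulr_alpha1 p : dom3 le x p -> ser3 alpha a b p * alpha x 1 = ser3 alpha a b p.
Proof.
case: p => y z [y0 z0 /= ->]; rewrite /ser3 /= -(ea_comp HE y0 z0) -mulrA.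
by rewrite -(se_mul (ea_endo HE y0)) b_supp.
Qed.

Lemma alpha1_mul_ser4 p :
  dom1 le (- x) p -> alpha x 1 * ser4 alpha a b p = ser4 alpha a b p.
Proof.
case: p => y z [_ _ /= x_eq]; rewrite /ser4 /= -opprB -x_eq opprK.
by rewrite mulrA -(se_mul (ea_endo HE x0)) mul1r.
Qed.

Lemma alpha1_mul_ser5 p : dom2 le (- x) p -> alpha x 1 * ser5 L a b p = ser5 L a b p.
Proof.
case: p => y z [[y0 _] [z0 _] /= x_eq]; rewrite /ser5 /=.
rewrite -(ta_module HL z0) (ea_comp HE z0 x0) -[x]opprK x_eq opprB addrC subrK.
by rewrite mulrA a_supp.
Qed.

Lemma alpha1_mul_ser6 p :
  dom6 le (- x) p -> alpha x 1 * ser6 alpha a b p = ser6 alpha a b p.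
Proof.
case: p => y z [y0 z0 /= x_eq]; rewrite /ser6 /= -[x]opprK x_eq opprB opprK.
by rewrite -(ea_comp HE z0 y0) mulrA -(se_mul (ea_endo HE z0)) a_supp.
Qed.

End Support.

Lemma l1prod_nonneg g : le 0 g -> l1prod nrm le alpha L a b g =
  fsum nrm (dom1 le g) (ser1 alpha a b) + fsum nrm (dom2 le g) (ser2 L a b)
  + fsum nrm (dom3 le g) (ser3 alpha a b).
Proof. by rewrite /l1prod; case: pselect. Qed.

Lemma l1prod_neg g : ~ le 0 g -> l1prod nrm le alpha L a b g =
  fsum nrm (dom1 le g) (ser4 alpha a b) + fsum nrm (dom2 le g) (ser5 L a b)
  + fsum nrm (dom6 le g) (ser6 alpha a b).
Proof. by rewrite /l1prod; case: pselect. Qed.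

Lemma l1prod_support x : le 0 x ->
  (exists c, l1prod nrm le alpha L a b x = c * alpha x 1) /\
  (exists c, l1prod nrm le alpha L a b (- x) = alpha x 1 * c).
Proof.
move=> x0; have x1_le1 := nrm_alpha1_le1 _ x0; split.
  exists (l1prod nrm le alpha L a b x); rewrite l1prod_nonneg // !mulrDl.
  rewrite (fsum_mulr_fixed x1_le1 (ser1_mulr_alpha1 x0)).
  rewrite (fsum_mulr_fixed x1_le1 (ser2_mulr_alpha1 x0)).
  by rewrite (fsum_mulr_fixed x1_le1 ser3_mulr_alpha1).
exists (l1prod nrm le alpha L a b (- x)).
have [->|x_neq0] := eqVneq x 0; first by rewrite (ea_zero HE) mul1r.
have Nx : ~ le 0 (- x).
  by move=> Nx0; move: x_neq0; rewrite (nonneg_opp_eq0 HT x0 Nx0) eqxx.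
rewrite l1prod_neg // !mulrDr (fsum_mull_fixed x1_le1 (alpha1_mul_ser4 x0)).
rewrite (fsum_mull_fixed x1_le1 (alpha1_mul_ser5 x0)).
by rewrite (fsum_mull_fixed x1_le1 alpha1_mul_ser6).
Qed.

Lemma sum_nrm_l1prod_approx {S e} : uniq S -> 0 < e -> exists T,
  [/\ uniq T, {in T, forall q, q.1 + q.2 \in S} &
      \sum_(g <- S) nrm (l1prod nrm le alpha L a b g) <=
      \sum_(q <- T) weight q + (size S)%:R * e].
Proof.
move=> + e0; elim: S => [|g S IH] /=; first by exists [::]; rewrite !big_nil mul0r addr0.
case/andP => gS /IH [T [uT TS le_T]].
have [Tg [uTg Tg_g le_Tg]] := nrm_l1prod_approx g e0.
exists (Tg ++ T); split.
- rewrite cat_uniq uTg uT andbT; apply/hasPn => q /TS qS.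
  by apply/negP => /Tg_g q_g; move: gS; rewrite -q_g qS.
- by move=> q; rewrite mem_cat in_cons => /orP [/Tg_g ->|/TS ->]; rewrite ?eqxx ?orbT.
- rewrite !big_cons big_cat /= -natr1 mulrDl mul1r.
  by move: le_Tg le_T; lra.
Qed.

Lemma sum_nrm_l1prod_le S : uniq S ->
  \sum_(g <- S) nrm (l1prod nrm le alpha L a b g) <= na * nb.
Proof.
move=> uS; apply/ler_addgt0Pr => e e0.
have n_gt0 : 0 < (size S).+1%:R :> R by rewrite ltr0n.
have [T [uT _ le_T]] := sum_nrm_l1prod_approx uS (divr_gt0 e0 n_gt0).
apply: le_trans le_T _; rewrite lerD ?sum_weight_le // mulrA ler_pdivrMr //.
by rewrite mulrC ler_wpM2l ?ltW // ltr_nat.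
Qed.

Lemma l1norm_l1prod_le : (l1norm nrm (l1prod nrm le alpha L a b) <= (na * nb)%:E)%E.
Proof.
rewrite /l1norm /esum; apply: ereal.ge_ereal_sup => _ [X [X_fin _] <-].
rewrite fsbig_finite //= sumEFin lee_fin; apply: sum_nrm_l1prod_le.
exact: finmap.fset_uniq.
Qed.

Lemma l1prod_l1_bound :
  [/\ l1prod_series_converge nrm le alpha L a b,
      in_l1 nrm le alpha (l1prod nrm le alpha L a b) &
      (l1norm nrm (l1prod nrm le alpha L a b) <= (na * nb)%:E)%E].
Proof.
split; [exact: l1prod_series_summable | split | exact: l1norm_l1prod_le].
- exact: l1prod_support.
- by apply: le_lt_trans l1norm_l1prod_le _; apply: ltry.
Qed.

End L1Product.
End CStarAlgebra.

Theorem proposition4p2 (R : realType) (A : algType R[i]) (nrm : A -> R)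
  (star : A -> A) (G : zmodType) (le : rel G) (alpha L : G -> A -> A) :
  is_cstar nrm star ->
  is_toag le ->
  is_endo_action star le alpha ->
  is_transfer_action nrm star le alpha L ->
  forall a b : G -> A,
    in_l1 nrm le alpha a -> in_l1 nrm le alpha b ->
    [/\ l1prod_series_converge nrm le alpha L a b,
        in_l1 nrm le alpha (l1prod nrm le alpha L a b) &
        (l1norm nrm (l1prod nrm le alpha L a b) <= l1norm nrm a * l1norm nrm b)%E].
Proof.
move=> HC HT HE HL a b a_l1 b_l1.
have [na [a_norm a_bound]] := l1norm_finite HC a_l1.2.
have [nb [b_norm b_bound]] := l1norm_finite HC b_l1.2.
have [conv prod_l1 prod_norm] := l1prod_l1_bound HC HT HE HL
  (in_l1_alpha1_mull HE a_l1) (in_l1_mulr_alpha1 HE b_l1) a_bound b_bound.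
by split=> //; rewrite a_norm b_norm -EFinM.
Qed.
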